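(* Let $h:[0,1]\to\mathbb{R}$ be continuous with a single turning point at $\delta\in(0,1)$, strictly decreasing on $[0,\delta]$ and strictly increasing on $[\delta,1]$, and with $\lim_{u\to0}h(u)=\lim_{u\to1}h(u)$. Write $h_\ell$ for the restriction of $h$ to $[0,\delta]$ and $h_r$ for its restriction to $[\delta,1]$. Let $F_h$ be the distribution function of $h(U_0)$, $U_0\sim\mathcal{U}(0,1)$. Then $T_h=F_h\circ h$ is a v-transform with fulcrum $\delta$ and generator $\Psi(x)=(1-\delta)^{-1}\big(1-h_r^{-1}\circ h_\ell(\delta x)\big)$. If $h$ is symmetric about $\delta=0.5$, then $\Psi(x)=x$ and $T_h=T_\vee$, where $T_\vee(u)=|2u-1|$.
   Context: A v-transform with fulcrum $\delta\in(0,1)$ and generator $\Psi$ (a continuous, strictly increasing distribution function on $[0,1]$) is the function $T(u)=(1-u)-(1-\delta)\Psi(u/\delta)$ for $u\le\delta$ and $T(u)=u-\delta\Psi^{-1}\big(\tfrac{1-u}{1-\delta}\big)$ for $u>\delta$. *)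

From HB Require Import structures.
From mathcomp Require Import all_boot all_order all_algebra.
From mathcomp Require Import all_classical all_reals all_analysis.
Set Implicit Arguments. Unset Strict Implicit. Unset Printing Implicit Defensive.
Import Order.TTheory GRing.Theory Num.Theory.
Import numFieldNormedType.Exports.
Local Open Scope classical_set_scope.
Local Open Scope ring_scope.

Section Defs.
Variable R : realType.

(* inverse of f restricted to the set A (a chosen preimage of y in A;
   unique whenever f is injective on A, 0 if y has no preimage in A) *)
Definition inv_on (f : R -> R) (A : set R) (y : R) : R :=
  xget 0 [set x | A x /\ f x = y].

Definition strict_incr_on (f : R -> R) (a b : R) : Prop :=
  forall x y, a <= x -> x < y -> y <= b -> f x < f y.

Definition strict_decr_on (f : R -> R) (a b : R) : Prop :=
  forall x y, a <= x -> x < y -> y <= b -> f y < f x.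

Definition is_generator (Psi : R -> R) : Prop :=
  {within `[0, 1], continuous Psi} /\ strict_incr_on Psi 0 1 /\
  Psi 0 = 0 /\ Psi 1 = 1.

Definition vtransform (delta : R) (Psi : R -> R) (u : R) : R :=
  if u <= delta then (1 - u) - (1 - delta) * Psi (u / delta)
  else u - delta * inv_on Psi `[0, 1] ((1 - u) / (1 - delta)).

Definition is_vtransform (T : R -> R) (delta : R) (Psi : R -> R) : Prop :=
  0 < delta < 1 /\ is_generator Psi /\
  forall u, 0 <= u <= 1 -> T u = vtransform delta Psi u.

(* Distribution function of h(U0), U0 ~ U(0,1):
   F_h(x) = Leb({u in [0,1] | h u <= x}). *)
Definition distF (h : R -> R) (x : R) : R :=
  fine ((@lebesgue_measure R) (`[0, 1] `&` [set u | h u <= x])).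

Definition T_h (h : R -> R) : R -> R := fun u => distF h (h u).

Definition Psi_h (h : R -> R) (delta : R) (x : R) : R :=
  (1 - delta)^-1 * (1 - inv_on h `[delta, 1] (h (delta * x))).

End Defs.

From HB Require Import structures.
From mathcomp Require Import all_boot all_order all_algebra.
From mathcomp Require Import all_classical all_reals all_analysis.
From mathcomp Require Import ring lra.
Import Order.TTheory GRing.Theory Num.Theory.
Import numFieldNormedType.Exports.
Local Open Scope classical_set_scope.
Local Open Scope ring_scope.

(* For y between h(delta) and h(0) = h(1), the sublevel set {u in [0,1] | h u <= y}
   is the interval between the preimages of y under the two monotone branches, so
   T_h u = h_r^-1 (h u) - h_l^-1 (h u).  For u <= delta this is h_r^-1 (h u) - u,
   which is (1 - u) - (1 - delta) Psi (u / delta); for u > delta it is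
   u - h_l^-1 (h u), and Psi (h_l^-1 (h u) / delta) = (1 - u) / (1 - delta)
   identifies h_l^-1 (h u) / delta with Psi^-1 ((1 - u) / (1 - delta)).  Psi is
   increasing and maps [0,1] onto [0,1], hence continuous.  When h is symmetric
   about 1/2 both branch inverses are u |-> 1 - u, so Psi = id and
   T_h u = |2u - 1|. *)

Lemma inv_onK {R : realType} (f : R -> R) (A : set R) x :
  (forall y z, A y -> A z -> f y = f z -> y = z) -> A x -> inv_on f A (f x) = x.
Proof.
move=> f_inj Ax; rewrite /inv_on; case: xgetP => [y _ [Ay fy]|no_preimage].
  exact: f_inj.
by case: (no_preimage x).
Qed.

Lemma strict_incr_on_mono {R : realType} {f : R -> R} {a b : R} :
  strict_incr_on f a b -> {in `[a, b] &, {mono f : x y / x <= y}}.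
Proof.
move=> f_incr; apply: le_mono_in => x y; rewrite !in_itv /= => /andP[ax _] /andP[_ yb] xy.
exact: f_incr ax xy yb.
Qed.

Lemma strict_decr_on_nmono {R : realType} {f : R -> R} {a b : R} :
  strict_decr_on f a b -> {in `[a, b] &, {mono f : x y /~ x <= y}}.
Proof.
move=> f_decr; apply: le_nmono_in => x y; rewrite !in_itv /= => /andP[_ xb] /andP[ay _] yx.
exact: f_decr ay yx xb.
Qed.

Section Proposition6.
Set Implicit Arguments.
Unset Strict Implicit.
Variables (R : realType) (h : R -> R) (d : R).
Hypothesis d01 : 0 < d < 1.
Hypothesis h_cont : {within `[0, 1], continuous h}.
Hypothesis h_decr : strict_decr_on h 0 d.
Hypothesis h_incr : strict_incr_on h d 1.
Hypothesis h0_h1 : h 0 = h 1.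

Let d_gt0 : 0 < d. Proof. by case/andP: d01. Qed.
Let d_lt1 : d < 1. Proof. by case/andP: d01. Qed.
Let zero_in_left : 0 \in `[0, d]. Proof. by rewrite in_itv /= lexx ltW. Qed.
Let d_in_left : d \in `[0, d]. Proof. by rewrite in_itv /= lexx ltW. Qed.
Let d_in_right : d \in `[d, 1]. Proof. by rewrite in_itv /= lexx ltW. Qed.
Let one_in_right : 1 \in `[d, 1]. Proof. by rewrite in_itv /= lexx ltW. Qed.
Let d_ge0 : 0 <= d. Proof. exact: ltW. Qed.
Let d_neq0 : d != 0. Proof. by rewrite gt_eqF. Qed.
Let one_sub_d_neq0 : 1 - d != 0. Proof. by rewrite subr_eq0 eq_sym lt_eqF. Qed.
Let left_sub01 x : x \in `[0, d] -> x \in `[0, 1].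
Proof. by rewrite !in_itv /= => /andP[-> /le_trans->] //; exact: ltW. Qed.
Let right_sub01 x : x \in `[d, 1] -> x \in `[0, 1].
Proof. by rewrite !in_itv /= => /andP[/(le_trans (ltW d_gt0))-> ->]. Qed.

Lemma h_le_left : {in `[0, d] &, {mono h : x y /~ x <= y}}.
Proof. exact: strict_decr_on_nmono. Qed.

Lemma h_le_right : {in `[d, 1] &, {mono h : x y / x <= y}}.
Proof. exact: strict_incr_on_mono. Qed.

Local Notation hl := (inv_on h `[0, d]).
Local Notation hr := (inv_on h `[d, 1]).

Lemma hlK x : x \in `[0, d] -> hl (h x) = x.
Proof. by apply: inv_onK => y z yin zin; apply: (dec_inj_in h_le_left). Qed.

Lemma hrK x : x \in `[d, 1] -> hr (h x) = x.
Proof. by apply: inv_onK => y z yin zin; apply: (inc_inj_in h_le_right). Qed.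

Lemma h_range x : x \in `[0, 1] -> h d <= h x <= h 0.
Proof.
rewrite in_itv /= => /andP[x0 x1]; have [xd|dx] := lerP x d.
  have xin : x \in `[0, d] by rewrite in_itv /= x0.
  by rewrite !h_le_left // xd x0.
have xin : x \in `[d, 1] by rewrite in_itv /= x1 ltW.
by rewrite h0_h1 !h_le_right // x1 ltW.
Qed.

Lemma h_left_onto y : h d <= y <= h 0 -> exists2 x, x \in `[0, d] & h x = y.
Proof.
move=> /andP[hdy yh0]; apply: IVT; first exact: ltW.
  by apply: continuous_subspaceW h_cont; apply: subset_itvScc; rewrite bnd_simp ?lexx ?ltW.
by rewrite min_r ?max_l ?hdy ?yh0 // (le_trans hdy).
Qed.

Lemma h_right_onto y : h d <= y <= h 0 -> exists2 x, x \in `[d, 1] & h x = y.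
Proof.
move=> /andP[hdy yh0]; apply: IVT; first exact: ltW.
  by apply: continuous_subspaceW h_cont; apply: subset_itvScc; rewrite bnd_simp ?lexx ?ltW.
by rewrite -h0_h1 min_l ?max_r ?hdy ?yh0 // (le_trans hdy).
Qed.

Lemma hlP y : h d <= y <= h 0 -> hl y \in `[0, d] /\ h (hl y) = y.
Proof. by case/h_left_onto => x xin <-; rewrite hlK. Qed.

Lemma hrP y : h d <= y <= h 0 -> hr y \in `[d, 1] /\ h (hr y) = y.
Proof. by case/h_right_onto => x xin <-; rewrite hrK. Qed.

Lemma sublevel_h y : h d <= y <= h 0 ->
  `[0, 1] `&` [set v | h v <= y] = `[hl y, hr y]%classic.
Proof.
move=> hy; have [hly hhl] := hlP hy; have [hry hhr] := hrP hy.
move: (hly) (hry); rewrite !in_itv /= => /andP[hl0 hld] /andP[dhr hr1].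
apply/seteqP; split => v /=; rewrite !in_itv /=.
- case=> /andP[v0 v1]; have [vd|dv] := lerP v d.
    have vin : v \in `[0, d] by rewrite in_itv /= v0.
    by rewrite -{1}hhl h_le_left // => ->; rewrite (le_trans vd).
  have vin : v \in `[d, 1] by rewrite in_itv /= v1 ltW.
  by rewrite -{1}hhr h_le_right // => ->; rewrite (le_trans hld) ?ltW.
- move=> /andP[hlv vhr]; split; first by rewrite (le_trans hl0) ?(le_trans vhr).
  have [vd|dv] := lerP v d.
    have vin : v \in `[0, d] by rewrite in_itv /= vd (le_trans hl0).
    by rewrite -hhl h_le_left.
  have vin : v \in `[d, 1] by rewrite in_itv /= ltW ?(le_trans vhr).
  by rewrite -hhr h_le_right.
Qed.

Lemma T_hE u : u \in `[0, 1] -> T_h h u = hr (h u) - hl (h u).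
Proof.
move=> u01; have hu := h_range u01.
have [+ _] := hlP hu; have [+ _] := hrP hu; rewrite !in_itv /= => /andP[dhr _] /andP[_ hld].
rewrite /T_h /distF sublevel_h // lebesgue_measure_itv /= lte_fin.
case: ltP => [_|hr_le_hl]; first by rewrite -EFinD.
suff -> : hr (h u) = hl (h u) by rewrite subrr.
by apply/le_anti; rewrite hr_le_hl (le_trans hld dhr).
Qed.

Local Notation Psi := (Psi_h h d).

Lemma mul_d_in x : x \in `[0, 1] -> d * x \in `[0, d].
Proof.
by rewrite !in_itv /= => /andP[x0 x1]; rewrite mulr_ge0 ?ler_piMr // ltW.
Qed.

Lemma Psi_h_le : {in `[0, 1] &, {mono Psi : x y / x <= y}}.
Proof.
move=> x y x01 y01; have dx_in := mul_d_in x01; have dy_in := mul_d_in y01.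
have [hrx hhrx] := hrP (h_range (left_sub01 dx_in)).
have [hry hhry] := hrP (h_range (left_sub01 dy_in)).
rewrite /Psi_h ler_pM2l ?invr_gt0 ?subr_gt0 // lerD2l lerN2.
by rewrite -(h_le_right hry hrx) hhrx hhry (h_le_left dy_in dx_in) ler_pM2l.
Qed.

Lemma Psi_h0 : Psi 0 = 0.
Proof. by rewrite /Psi_h mulr0 h0_h1 hrK // subrr mulr0. Qed.

Lemma Psi_h1 : Psi 1 = 1.
Proof. by rewrite /Psi_h mulr1 hrK // mulVf. Qed.

Lemma hl_div_in u : u \in `[d, 1] -> hl (h u) / d \in `[0, 1].
Proof.
move=> uin; have [+ _] := hlP (h_range (right_sub01 uin)).
by rewrite !in_itv /= => /andP[a0 ad]; rewrite divr_ge0 //= ler_pdivrMr // mul1r.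
Qed.

Lemma Psi_h_hl u : u \in `[d, 1] -> Psi (hl (h u) / d) = (1 - u) / (1 - d).
Proof.
move=> uin; have [_ hhl] := hlP (h_range (right_sub01 uin)).
by rewrite /Psi_h mulrCA mulfV // mulr1 hhl hrK // mulrC.
Qed.

Lemma Psi_h_surj : set_surj `[0, 1] `[Psi 0, Psi 1] Psi.
Proof.
rewrite Psi_h0 Psi_h1 => y; rewrite /= in_itv /= => /andP[y0 y1].
have uin : 1 - (1 - d) * y \in `[d, 1].
  have : 0 <= (1 - d) * (1 - y) by rewrite mulr_ge0 // subr_ge0 // ltW.
  have : 0 <= (1 - d) * y by rewrite mulr_ge0 // subr_ge0 ltW.
  by rewrite in_itv /=; lra.
exists (hl (h (1 - (1 - d) * y)) / d); first exact: hl_div_in.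
by rewrite Psi_h_hl // subKr mulrAC mulfV ?mul1r.
Qed.

Lemma Psi_h_generator : is_generator Psi.
Proof.
split; first exact: segment_inc_surj_continuous Psi_h_le Psi_h_surj.
split; last by rewrite Psi_h0 Psi_h1.
move=> x y x0 xy y1.
have x01 : x \in `[0, 1] by rewrite in_itv /= x0 (le_trans (ltW xy) y1).
have y01 : y \in `[0, 1] by rewrite in_itv /= y1 (le_trans x0 (ltW xy)).
by rewrite (leW_mono_in Psi_h_le).
Qed.

Lemma inv_Psi_h u :
  u \in `[d, 1] -> inv_on Psi `[0, 1] ((1 - u) / (1 - d)) = hl (h u) / d.
Proof.
move=> uin; rewrite -Psi_h_hl //; apply: inv_onK (hl_div_in uin) => x y xin yin.
exact: (inc_inj_in Psi_h_le).
Qed.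

Lemma T_h_vtransform : is_vtransform (T_h h) d Psi.
Proof.
split=> //; split; first exact: Psi_h_generator.
move=> u /andP[u0 u1]; have u01 : u \in `[0, 1] by rewrite in_itv /= u0.
rewrite /vtransform T_hE //; case: lerP => [ud|du].
  rewrite hlK ?in_itv /= ?u0 // /Psi_h mulVKf // mulrCA mulfV // mulr1.
  ring.
have uin : u \in `[d, 1] by rewrite in_itv /= u1 ltW.
by rewrite hrK // inv_Psi_h // mulrCA mulfV // mulr1.
Qed.

Hypothesis d_half : d = 1 / 2.
Hypothesis h_sym : forall x, 0 <= x <= 1 / 2 -> h (1 / 2 - x) = h (1 / 2 + x).

Lemma h_reflect v : v \in `[0, d] -> h (1 - v) = h v.
Proof.
rewrite in_itv /= d_half => /andP[v0 vd].
have x_in : 0 <= 1 / 2 - v <= 1 / 2 by apply/andP; split; lra.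
by have := h_sym x_in; rewrite subKr => ->; congr h; field.
Qed.

Lemma hr_reflect v : v \in `[0, d] -> hr (h v) = 1 - v.
Proof.
move=> vin; rewrite -h_reflect // hrK //.
by move: vin; rewrite !in_itv /= d_half => /andP[v0 vd]; apply/andP; split; lra.
Qed.

Lemma hl_reflect u : u \in `[d, 1] -> hl (h u) = 1 - u.
Proof.
move=> uin; have u'in : 1 - u \in `[0, d].
  by move: uin; rewrite !in_itv /= d_half => /andP[du u1]; apply/andP; split; lra.
by rewrite -{1}(subKr 1 u) h_reflect // hlK.
Qed.

Lemma Psi_h_id x : x \in `[0, 1] -> Psi x = x.
Proof. by move=> x01; rewrite /Psi_h hr_reflect ?mul_d_in // d_half; field. Qed.

Lemma T_h_abs u : u \in `[0, 1] -> T_h h u = `|2 * u - 1|.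
Proof.
move=> u01; rewrite T_hE //; move: u01; rewrite in_itv /= => /andP[u0 u1].
have [ud|du] := lerP u d.
  have uin : u \in `[0, d] by rewrite in_itv /= u0.
  rewrite hlK // hr_reflect // ler0_norm; first ring.
  by move: ud; rewrite d_half; lra.
have uin : u \in `[d, 1] by rewrite in_itv /= u1 ltW.
rewrite hrK // hl_reflect // ger0_norm; first ring.
by move: du; rewrite d_half; lra.
Qed.

End Proposition6.

Theorem proposition6 (R : realType) (h : R -> R) (delta : R) :
  0 < delta < 1 ->
  {within `[0, 1], continuous h} ->
  strict_decr_on h 0 delta ->
  strict_incr_on h delta 1 ->
  h 0 = h 1 ->
  is_vtransform (T_h h) delta (Psi_h h delta) /\
  (delta = 1 / 2 ->
   (forall x, 0 <= x <= 1 / 2 -> h (1 / 2 - x) = h (1 / 2 + x)) ->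
   (forall x, 0 <= x <= 1 -> Psi_h h delta x = x) /\
   (forall u, 0 <= u <= 1 -> T_h h u = `|2 * u - 1|)).
Proof.
move=> d01 h_cont h_decr h_incr h0_h1; split; first exact: T_h_vtransform.
move=> d_half h_sym; split.
  by move=> x x01; apply: (Psi_h_id d01 h_incr d_half h_sym); rewrite in_itv.
by move=> u u01; apply: (T_h_abs d01 h_cont h_decr h_incr h0_h1 d_half h_sym); rewrite in_itv.
Qed.
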